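(* For every $x\in\Pi[N]$ and every $k\in\mathbb Z$, $$x[k]=\frac12\sum_{\mu=0}^{1}\sum_{l=0}^{N/2-1}\Big(y^{\mu}[l]\,\psi_{[1],\mu}[k-2l]+c^{\mu}[l]\,\varphi_{[1],\mu}[k-2l]\Big),$$ where $y^{\mu}[l]=\langle x,\psi_{[1],\mu}[\cdot-2l]\rangle$ and $c^{\mu}[l]=\langle x,\varphi_{[1],\mu}[\cdot-2l]\rangle$. Consequently the system $\{\psi_{[1],\mu}[\cdot-2l]\}\cup\{\varphi_{[1],\mu}[\cdot-2l]\}$ ($\mu\in\{0,1\}$, $0\le l<N/2$) is a tight frame of $\Pi[N]$ with frame bound $2$.
   Context: Let $N=2^{J}$ with $J\ge 1$ an integer and $\omega=e^{2\pi i/N}$. $\Pi[N]$ denotes the real vector space of real-valued $N$-periodic sequences $x=\{x[k]\}_{k\in\mathbb Z}$, with inner product $\langle x,y\rangle=\sum_{k=0}^{N-1}x[k]y[k]$. The DFT of an $N$-periodic sequence is $\hat x[n]=\sum_{k=0}^{N-1}x[k]\omega^{-kn}$, with inverse $x[k]=\frac1N\sum_{n=0}^{N-1}\hat x[n]\omega^{kn}$. Fix an integer $r\ge1$; let $U[n]=\tfrac12\big(\cos^{4r}\tfrac{\pi n}{N}+\sin^{4r}\tfrac{\pi n}{N}\big)$, $\beta[n]=\cos^{2r}\tfrac{\pi n}{N}/\sqrt{U[n]}$, $\alpha[n]=\omega^{n}\sin^{2r}\tfrac{\pi n}{N}/\sqrt{U[n]}$. The first-level wavelet packets $\psi_{[1],0},\psi_{[1],1}\in\Pi[N]$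 have DFTs $\hat\psi_{[1],0}=\beta$, $\hat\psi_{[1],1}=\alpha$. Known fact (may be assumed): $\{\psi_{[1],\mu}[\cdot-2l]:\mu\in\{0,1\},\,0\le l<N/2\}$ is an orthonormal basis of $\Pi[N]$. The complementary wavelet packets $\varphi_{[1],\mu}\in\Pi[N]$ have DFT $\hat\varphi_{[1],\mu}[n]=-i\hat\psi_{[1],\mu}[n]$ for $0<n<N/2$, $=i\hat\psi_{[1],\mu}[n]$ for $N/2<n<N$, and $=\hat\psi_{[1],\mu}[n]$ for $n\in\{0,N/2\}$ (indices mod $N$). *)

From Stdlib Require Import Reals ZArith Arith Lra Lia.
Open Scope R_scope.

Record Cx := mkC { Cre : R ; Cim : R }.
Definition Cadd (a b : Cx) : Cx := mkC (Cre a + Cre b) (Cim a + Cim b).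
Definition Cmul (a b : Cx) : Cx :=
  mkC (Cre a * Cre b - Cim a * Cim b) (Cre a * Cim b + Cim a * Cre b).
Definition Creal (t : R) : Cx := mkC t 0.
Definition Ci : Cx := mkC 0 1.
Definition Cneg (a : Cx) : Cx := mkC (- Cre a) (- Cim a).

Fixpoint rsum (n : nat) (f : nat -> R) : R :=
  match n with O => 0 | S m => rsum m f + f m end.
Fixpoint csum (n : nat) (f : nat -> Cx) : Cx :=
  match n with O => Creal 0 | S m => Cadd (csum m f) (f m) end.

(* omega^m with omega = e^{2 pi i / N}, m an integer *)
Definition omega_pow (N : nat) (m : Z) : Cx :=
  mkC (cos (2 * PI * IZR m / INR N)) (sin (2 * PI * IZR m / INR N)).

Definition periodic (N : nat) (x : Z -> R) : Prop :=
  forall k : Z, x (k + Z.of_nat N)%Z = x k.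

Definition inner (N : nat) (x y : Z -> R) : R :=
  rsum N (fun k => x (Z.of_nat k) * y (Z.of_nat k)).

(* inverse DFT: x[k] = 1/N sum_{n=0}^{N-1} X[n] omega^{kn}.  The sequences
   considered have Hermitian-symmetric spectra, so this sum is real; we take
   its real part to obtain the element of Pi[N]. *)
Definition idft (N : nat) (X : nat -> Cx) (k : Z) : R :=
  / INR N * Cre (csum N (fun n => Cmul (X n) (omega_pow N (k * Z.of_nat n)%Z))).

Definition Ucoef (N r n : nat) : R :=
  / 2 * (cos (PI * INR n / INR N) ^ (4 * r) + sin (PI * INR n / INR N) ^ (4 * r)).

Definition beta (N r n : nat) : Cx :=
  Creal (cos (PI * INR n / INR N) ^ (2 * r) / sqrt (Ucoef N r n)).

Definition alpha (N r n : nat) : Cx :=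
  Cmul (omega_pow N (Z.of_nat n))
       (Creal (sin (PI * INR n / INR N) ^ (2 * r) / sqrt (Ucoef N r n))).

Definition psihat (N r mu n : nat) : Cx :=
  match mu with O => beta N r n | _ => alpha N r n end.

Definition phihat (N r mu n : nat) : Cx :=
  if andb (Nat.ltb 0 n) (Nat.ltb n (N / 2)) then Cmul (Cneg Ci) (psihat N r mu n)
  else if andb (Nat.ltb (N / 2) n) (Nat.ltb n N) then Cmul Ci (psihat N r mu n)
  else psihat N r mu n.

Definition psi1 (N r mu : nat) : Z -> R := idft N (psihat N r mu).
Definition phi1 (N r mu : nat) : Z -> R := idft N (phihat N r mu).

Definition shift2 (f : Z -> R) (l : nat) : Z -> R :=
  fun k => f (k - 2 * Z.of_nat l)%Z.

From Stdlib Require Import Reals ZArith Arith Lia Lra.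
From mathcomp Require Import ssreflect.
From mathcomp Require ssrfun ssrbool eqtype ssrnat seq bigop ssralg ssrnum.
From mathcomp Require Rstruct complex.
From mathcomp.algebra_tactics Require ring.
From mathcomp.zify Require zify.
Open Scope R_scope.

(* Write N = 2M.  Call a pair of spectra G_0, G_1 on Z/N paraunitary when
   sum_mu G_mu(n) conj G_mu(n') = 2 [n = n'] whenever n' = n mod M.  For Hermitian
   paraunitary spectra, the N translates g_mu(. - 2l) of the (real) inverse DFTs have the
   N-periodic delta as reproducing kernel (reproducing_of_spectrum): expanding the kernel
   in frequency, the sum over l restricts n' to n + MZ, paraunitarity keeps only n' = n,
   and the remaining character sum is N times the delta.  A reproducing system expands
   every x in Pi[N] in its analysis coefficients (expansion) and satisfies Parseval's
   identity (parseval).  The spectra (beta, alpha) of psi are Hermitian and paraunitary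
   because beta^2 + |alpha|^2 = 2 and the half-band shift n -> n + M exchanges cos^2r and
   sin^2r; the spectra of phi are those of psi times a Hermitian unimodular multiplier,
   which preserves both properties.  Adding the expansions (resp. the Parseval identities)
   of the psi and phi systems gives the reconstruction formula (resp. the frame bound 2). *)

(* theta N n = pi n / N; pamp and qamp are the moduli of beta[n] and alpha[n] *)
Definition theta (N n : nat) : R := PI * INR n / INR N.
Definition pamp (N r n : nat) : R := cos (theta N n) ^ (2 * r) / sqrt (Ucoef N r n).
Definition qamp (N r n : nat) : R := sin (theta N n) ^ (2 * r) / sqrt (Ucoef N r n).

Lemma pow_even_opp (x : R) (k : nat) : (- x) ^ (2 * k) = x ^ (2 * k).
Proof. by rewrite !pow_sqr Rmult_opp_opp. Qed.

Lemma Ucoef_theta (N r n : nat) :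
  Ucoef N r n = / 2 * ((cos (theta N n) ^ (2 * r)) ^ 2 + (sin (theta N n) ^ (2 * r)) ^ 2).
Proof.
by rewrite /Ucoef /theta -!pow_mult (_ : (2 * r * 2 = 4 * r)%nat) //; lia.
Qed.

(* U[n] > 0, so beta and alpha are well defined: cos and sin never vanish together *)
Lemma Ucoef_pos (N r n : nat) : 0 < Ucoef N r n.
Proof.
rewrite Ucoef_theta.
have hcs := sin2_cos2 (theta N n); rewrite /Rsqr in hcs.
set c := cos (theta N n) in hcs *; set s := sin (theta N n) in hcs *.
suff : c <> 0 \/ s <> 0.
  case=> [hc | hs].
  - have := pow_nonzero c (2 * r) hc; nra.
  - have := pow_nonzero s (2 * r) hs; nra.
case: (Req_dec c 0) => hc; [right | by left].
by move=> hs; rewrite hc hs in hcs; lra.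
Qed.

Lemma amp_sq_sum (N r n : nat) : pamp N r n * pamp N r n + qamp N r n * qamp N r n = 2.
Proof.
have hU := Ucoef_pos N r n.
have hsq := sqrt_sqrt _ (Rlt_le _ _ hU).
have hs0 := sqrt_lt_R0 _ hU.
have hUe := Ucoef_theta N r n.
rewrite /pamp /qamp.
set U := Ucoef N r n in hU hsq hs0 hUe *.
set a := cos (theta N n) ^ (2 * r) in hUe *; set b := sin (theta N n) ^ (2 * r) in hUe *.
have -> : a / sqrt U * (a / sqrt U) + b / sqrt U * (b / sqrt U) =
          (a * a + b * b) / (sqrt U * sqrt U) by field; lra.
by rewrite hsq hUe; field; nra.
Qed.

Lemma theta_half_shift (M n : nat) : (0 < M)%nat ->
  theta (2 * M) (n + M) = PI / 2 + theta (2 * M) n.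
Proof.
move=> hM; rewrite /theta plus_INR mult_INR.
have hM0 : INR M <> 0 by apply: not_0_INR; lia.
by simpl; field.
Qed.

Lemma theta_reflect (N n : nat) : (0 < N)%nat -> (n <= N)%nat ->
  theta N (N - n) = PI - theta N n.
Proof.
move=> hN hn; rewrite /theta minus_INR //.
have hN0 : INR N <> 0 by apply: not_0_INR; lia.
by field.
Qed.

Lemma cos_pi_minus (x : R) : cos (PI - x) = - cos x.
Proof. by rewrite cos_minus cos_PI sin_PI; ring. Qed.

Lemma cos_pi2_plus (x : R) : cos (PI / 2 + x) = - sin x.
Proof. by rewrite (sin_cos x) Ropp_involutive. Qed.

Lemma Ucoef_half_shift (M r n : nat) : (0 < M)%nat ->
  Ucoef (2 * M) r (n + M) = Ucoef (2 * M) r n.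
Proof.
move=> hM; rewrite !Ucoef_theta theta_half_shift // cos_pi2_plus -cos_sin pow_even_opp.
by ring.
Qed.

Lemma pamp_half_shift (M r n : nat) : (0 < M)%nat ->
  pamp (2 * M) r (n + M) = qamp (2 * M) r n.
Proof.
by move=> hM; rewrite /pamp /qamp Ucoef_half_shift // theta_half_shift // cos_pi2_plus pow_even_opp.
Qed.

Lemma qamp_half_shift (M r n : nat) : (0 < M)%nat ->
  qamp (2 * M) r (n + M) = pamp (2 * M) r n.
Proof.
by move=> hM; rewrite /pamp /qamp Ucoef_half_shift // theta_half_shift // -cos_sin.
Qed.

Lemma Ucoef_reflect (N r n : nat) : (0 < N)%nat -> (n <= N)%nat ->
  Ucoef N r (N - n) = Ucoef N r n.
Proof.
by move=> hN hn; rewrite !Ucoef_theta theta_reflect // cos_pi_minus sin_PI_x pow_even_opp.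
Qed.

Lemma pamp_reflect (N r n : nat) : (0 < N)%nat -> (n <= N)%nat ->
  pamp N r (N - n) = pamp N r n.
Proof.
by move=> hN hn; rewrite /pamp Ucoef_reflect // theta_reflect // cos_pi_minus pow_even_opp.
Qed.

Lemma qamp_reflect (N r n : nat) : (0 < N)%nat -> (n <= N)%nat ->
  qamp N r (N - n) = qamp N r n.
Proof.
by move=> hN hn; rewrite /qamp Ucoef_reflect // theta_reflect // sin_PI_x.
Qed.

Lemma cos_neq_1 (t : R) : 0 < t < 2 * PI -> cos t <> 1.
Proof.
move=> [h0 h2] h1.
have hs : 0 < sin (t / 2) by apply: sin_gt_0; lra.
rewrite (_ : t = 2 * (t / 2)) in h1; last by field.
by rewrite cos_2a_sin in h1; nra.
Qed.

Lemma angle_add (N : nat) (a b : Z) :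
  2 * PI * IZR (a + b) / INR N = 2 * PI * IZR a / INR N + 2 * PI * IZR b / INR N.
Proof. by rewrite plus_IZR /Rdiv; ring. Qed.

Lemma angle_opp (N : nat) (a : Z) : 2 * PI * IZR (- a) / INR N = - (2 * PI * IZR a / INR N).
Proof. by rewrite opp_IZR /Rdiv; ring. Qed.

Lemma angle_full (N : nat) : (0 < N)%nat -> 2 * PI * IZR (Z.of_nat N) / INR N = 2 * PI.
Proof.
move=> hN; rewrite -INR_IZR_INZ.
have hN0 : INR N <> 0 by apply: not_0_INR; lia.
by field.
Qed.

Lemma angle_half (M : nat) : (0 < M)%nat -> 2 * PI * IZR (Z.of_nat M) / INR (2 * M) = PI.
Proof.
move=> hM; rewrite -INR_IZR_INZ mult_INR.
have hM0 : INR M <> 0 by apply: not_0_INR; lia.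
by simpl; field.
Qed.

(* the angle 2 pi qb/(qP) lies strictly between 0 and 2 pi when 0 < b < P *)
Lemma cos_angle_neq_1 (q P : nat) (b : Z) : (0 < q)%nat -> (0 < b < Z.of_nat P)%Z ->
  cos (2 * PI * IZR (Z.of_nat q * b) / INR (q * P)) <> 1.
Proof.
move=> hq hb; apply: cos_neq_1.
have hP : (0 < P)%nat by lia.
rewrite mult_IZR mult_INR !INR_IZR_INZ.
have hq0 : 0 < IZR (Z.of_nat q) by apply: IZR_lt; lia.
have hP0 : 0 < IZR (Z.of_nat P) by apply: IZR_lt; lia.
have hb0 : 0 < IZR b by apply: IZR_lt; lia.
have hbP : IZR b < IZR (Z.of_nat P) by apply: IZR_lt; lia.
have -> : 2 * PI * (IZR (Z.of_nat q) * IZR b) / (IZR (Z.of_nat q) * IZR (Z.of_nat P)) =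
          2 * PI * (IZR b / IZR (Z.of_nat P)) by field; lra.
set u := IZR b / IZR (Z.of_nat P).
have hu : IZR (Z.of_nat P) * u = IZR b by rewrite /u; field; lra.
have := PI_RGT_0; nra.
Qed.

Definition pdelta (N : nat) (t : Z) : R := if (t mod Z.of_nat N =? 0)%Z then 1 else 0.

Lemma periodic_shift (N : nat) (x : Z -> R) (t : Z) : periodic N x ->
  forall q : Z, x (t + Z.of_nat N * q)%Z = x t.
Proof.
move=> hx; elim/Z.peano_ind => [|q IH|q IH]; first by rewrite Z.mul_0_r Z.add_0_r.
- by rewrite -IH -[in RHS]hx; congr x; lia.
- by rewrite -IH -[in LHS]hx; congr x; lia.
Qed.

Lemma periodic_mod (N : nat) (x : Z -> R) (k : Z) : (0 < N)%nat -> periodic N x ->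
  x k = x (k mod Z.of_nat N)%Z.
Proof.
move=> hN hx; rewrite -(periodic_shift N x (k mod Z.of_nat N) hx (k / Z.of_nat N)).
by congr x; have := Z.div_mod k (Z.of_nat N) ltac:(lia); lia.
Qed.

Lemma sub_mod_eq0 (N j k : Z) : (0 < N)%Z -> (0 <= j < N)%Z ->
  ((j - k) mod N = 0 <-> j = k mod N)%Z.
Proof.
move=> hN hj; split => [/Z.mod_divide [|a ha]|->]; first by lia.
  by rewrite (_ : k = j + (- a) * N)%Z ?Z_mod_plus_full ?Z.mod_small //; lia.
rewrite (_ : k mod N - k = - (k / N) * N)%Z ?Z_mod_mult //.
by have := Z.div_mod k N ltac:(lia); lia.
Qed.

Lemma rsum_add (n : nat) (f g : nat -> R) : rsum n (fun i => f i + g i) = rsum n f + rsum n g.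
Proof. by elim: n => [|n IH] /=; [ring | rewrite IH; ring]. Qed.

Lemma rsum_ext (n : nat) (f g : nat -> R) : (forall i, f i = g i) -> rsum n f = rsum n g.
Proof. by move=> hfg; elim: n => [|n IH] //=; rewrite IH hfg. Qed.

Lemma rsum_add2 (m n : nat) (f g : nat -> nat -> R) :
  rsum m (fun i => rsum n (fun j => f i j + g i j)) =
  rsum m (fun i => rsum n (f i)) + rsum m (fun i => rsum n (g i)).
Proof. by rewrite -rsum_add; apply: rsum_ext => i; apply: rsum_add. Qed.

Module SpectralFrame.
Import ssrfun ssrbool eqtype ssrnat seq bigop ssralg ssrnum Rstruct complex.
Import mathcomp.algebra_tactics.ring mathcomp.zify.zify.
Import GRing.Theory Num.Theory.

Section FiniteSums.
Local Open Scope ring_scope.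

Lemma rsumE (n : nat) (f : nat -> R) : rsum n f = \sum_(0 <= i < n) f i.
Proof.
elim: n => [|n IH]; first by rewrite big_geq.
by rewrite /= IH big_nat_recr.
Qed.

Lemma sum_nat_delta (V : nmodType) (f : nat -> V) (i n : nat) : (i < n)%N ->
  \sum_(0 <= j < n) (if i == j then f j else 0) = f i.
Proof.
move=> hi; rewrite (bigD1_seq i) ?mem_index_iota ?iota_uniq //= eqxx big1 ?addr0 //.
by move=> j /negbTE; rewrite eq_sym => ->.
Qed.

Lemma sum_factor_exchange (S : comNzRingType) (K L N : nat)
    (A : nat -> nat -> nat -> S) (F : nat -> nat -> S) (B : nat -> nat -> nat -> S) :
  \sum_(0 <= mu < K) \sum_(0 <= l < L) \sum_(0 <= n < N) \sum_(0 <= n' < N)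
     A mu n n' * (F n n' * B l n n') =
  \sum_(0 <= n < N) \sum_(0 <= n' < N)
     F n n' * ((\sum_(0 <= mu < K) A mu n n') * (\sum_(0 <= l < L) B l n n')).
Proof.
under eq_bigr do rewrite exchange_big_nat.
under eq_bigr do under eq_bigr do rewrite exchange_big_nat.
rewrite exchange_big_nat.
under eq_bigr do rewrite exchange_big_nat.
apply: eq_bigr => n _; apply: eq_bigr => n' _ /=.
rewrite big_distrlr mulr_sumr; apply: eq_bigr => mu _; rewrite mulr_sumr.
by apply: eq_bigr => l _ /=; ring.
Qed.

End FiniteSums.

Section RootsOfUnity.
Local Open Scope ring_scope.
Local Open Scope complex_scope.

Definition toC (a : Cx) : R[i] := Complex (Cre a) (Cim a).

Lemma toC_add (a b : Cx) : toC (Cadd a b) = toC a + toC b.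
Proof. by case: a => ? ?; case: b => ? ?. Qed.

Lemma toC_mul (a b : Cx) : toC (Cmul a b) = toC a * toC b.
Proof. by case: a => ? ?; case: b => ? ?. Qed.

Lemma toC_csum (n : nat) (f : nat -> Cx) :
  toC (csum n f) = \sum_(0 <= i < n) toC (f i).
Proof.
elim: n => [|n IH]; first by rewrite big_geq.
by rewrite /= toC_add IH big_nat_recr.
Qed.

(* complex conjugation is a ring morphism; stated on conjc itself for rewriting *)
Lemma conjcM (a b : R[i]) : conjc (a * b) = conjc a * conjc b.
Proof. exact: rmorphM. Qed.

Lemma conjcN (a : R[i]) : conjc (- a) = - conjc a.
Proof. exact: rmorphN. Qed.

Lemma conjc1 : conjc 1 = 1 :> R[i].
Proof. exact: rmorph1. Qed.

Lemma conjc_sum (m n : nat) (F : nat -> R[i]) :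
  conjc (\sum_(m <= i < n) F i) = \sum_(m <= i < n) conjc (F i).
Proof. exact: rmorph_sum. Qed.

(* likewise for the embedding of R into C *)
Lemma realcM (x y : R) : ((x * y)%:C : R[i]) = x%:C * y%:C.
Proof. exact: rmorphM. Qed.

Lemma realcD (x y : R) : ((x + y)%:C : R[i]) = x%:C + y%:C.
Proof. exact: rmorphD. Qed.

Lemma realc_nat (n : nat) : (((n%:R : R))%:C : R[i]) = n%:R.
Proof. exact: rmorph_nat. Qed.

Lemma realc_sum (m n : nat) (F : nat -> R) :
  ((\sum_(m <= i < n) F i)%:C : R[i]) = \sum_(m <= i < n) (F i)%:C.
Proof. exact: rmorph_sum. Qed.

Definition omega (N : nat) (a : Z) : R[i] := toC (omega_pow N a).

Lemma omegaD (N : nat) (a b : Z) : omega N (a + b) = omega N a * omega N b.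
Proof.
rewrite /omega /omega_pow /= angle_add cos_plus sin_plus.
by apply/eqP; rewrite eq_complex /=; apply/andP; split; apply/eqP;
  rewrite ?RplusE ?RminusE ?RmultE; ring.
Qed.

Lemma omegaN (N : nat) (a : Z) : omega N (- a) = conjc (omega N a).
Proof. by rewrite /omega /omega_pow /= angle_opp cos_neg sin_neg. Qed.

Lemma omega0 (N : nat) : omega N 0 = 1.
Proof. by rewrite /omega /omega_pow /= /Rdiv !Rmult_0_r Rmult_0_l cos_0 sin_0. Qed.

Lemma omega_unit (N : nat) (a : Z) : omega N a * conjc (omega N a) = 1.
Proof. by rewrite -omegaN -omegaD Z.add_opp_diag_r omega0. Qed.

Lemma omegaXn (N l : nat) (a : Z) : omega N (Z.of_nat l * a) = omega N a ^+ l.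
Proof.
elim: l => [|l IH]; first by rewrite expr0 omega0.
by rewrite Nat2Z.inj_succ Z.mul_succ_l omegaD IH exprSr.
Qed.

Lemma omega_period (N : nat) (a : Z) : (0 < N)%N -> omega N (Z.of_nat N * a) = 1.
Proof.
move=> hN.
have full : omega N (Z.of_nat N) = 1.
  rewrite /omega /omega_pow /= angle_full; last by apply/ltP.
  by rewrite cos_2PI sin_2PI.
have nat_case l : omega N (Z.of_nat N * Z.of_nat l) = 1.
  by rewrite Z.mul_comm omegaXn full expr1n.
case: (Z_le_gt_dec 0 a) => ha.
  by rewrite -(Z2Nat.id a ha) nat_case.
rewrite (_ : (Z.of_nat N * a = - (Z.of_nat N * Z.of_nat (Z.to_nat (- a))))%Z); last by lia.
by rewrite omegaN nat_case conjc_real.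
Qed.

Lemma omega_half (M : nat) : (0 < M)%N -> omega (2 * M) (Z.of_nat M) = -1.
Proof.
move=> hM; rewrite /omega /omega_pow /= angle_half; last by apply/ltP.
by rewrite cos_PI sin_PI; apply/eqP; rewrite eq_complex /= oppr0 !eqxx.
Qed.

Lemma omega_neq1 (q P : nat) (d : Z) : (0 < q)%N -> (0 < P)%N ->
  (d mod Z.of_nat P <> 0)%Z -> omega (q * P) (Z.of_nat q * d) != 1.
Proof.
move=> hq hP hd.
have hb := Z.mod_pos_bound d (Z.of_nat P) ltac:(lia).
have -> : (Z.of_nat q * d = Z.of_nat (q * P) * (d / Z.of_nat P) + Z.of_nat q * (d mod Z.of_nat P))%Z.
  by have := Z.div_mod d (Z.of_nat P) ltac:(lia); lia.
rewrite omegaD omega_period ?muln_gt0 ?hq // mul1r.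
apply/eqP => /(congr1 (@complex.Re R)) /=.
by apply: cos_angle_neq_1; lia.
Qed.

Lemma omega_geometric (q P : nat) (d : Z) : (0 < q)%N -> (0 < P)%N ->
  \sum_(0 <= l < P) omega (q * P) (Z.of_nat q * Z.of_nat l * d) = (P%:R * pdelta P d)%:C.
Proof.
move=> hq hP; rewrite /pdelta; case: Z.eqb_spec => hd.
  have [t ht] : (Z.of_nat P | d)%Z by apply Z.mod_divide; lia.
  rewrite mulr1 rmorph_nat -[P in RHS]subn0 -sumr_const_nat.
  apply: eq_bigr => l _.
  rewrite (_ : (Z.of_nat q * Z.of_nat l * d = Z.of_nat (q * P) * (Z.of_nat l * t))%Z); last by lia.
  by rewrite omega_period // muln_gt0 hq.
set w := omega (q * P) (Z.of_nat q * d).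
have powers l : omega (q * P) (Z.of_nat q * Z.of_nat l * d) = w ^+ l.
  by rewrite -omegaXn; congr omega; lia.
have wP : w ^+ P = 1.
  rewrite -omegaXn (_ : (Z.of_nat P * (Z.of_nat q * d) = Z.of_nat (q * P) * d)%Z); last by lia.
  by rewrite omega_period // muln_gt0 hq.
have : (w - 1) * \sum_(0 <= l < P) w ^+ l = 0 by rewrite big_mkord -subrX1 wP subrr.
move/eqP; rewrite mulf_eq0 subr_eq0 (negbTE (omega_neq1 q P d hq hP hd)) /= => /eqP sum0.
by rewrite (eq_bigr _ (fun l _ => powers l)) sum0 mulr0.
Qed.

End RootsOfUnity.

Section Synthesis.
Local Open Scope ring_scope.
Local Open Scope complex_scope.

Definition synth (N : nat) (G : nat -> R[i]) (t : Z) : R[i] :=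
  \sum_(0 <= n < N) G n * omega N (t * Z.of_nat n).

Definition hermitian (N : nat) (G : nat -> R[i]) : Prop :=
  G 0%N = conjc (G 0%N) /\ forall n, (0 < n < N)%N -> G (N - n)%N = conjc (G n).

Lemma synth_real (N : nat) (G : nat -> R[i]) (t : Z) : (0 < N)%N -> hermitian N G ->
  conjc (synth N G t) = synth N G t.
Proof.
move=> hN [h0 hG].
rewrite /synth conjc_sum [in LHS]big_ltn // [in RHS]big_ltn //; congr (_ + _).
  by rewrite conjcM -h0 -omegaN; congr (_ * omega N _); lia.
rewrite big_nat_rev; apply: eq_big_nat => n /andP [hn1 hn2].
rewrite (_ : (0 + 1 + N - n.+1 = N - n)%N); last by lia.
rewrite conjcM hG; last by lia.
rewrite conjcK -omegaN.
rewrite (_ : (- (t * Z.of_nat (N - n)) = t * Z.of_nat n + Z.of_nat N * - t)%Z); last by lia.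
by rewrite omegaD omega_period // mulr1.
Qed.

Lemma Re_conjc_fixed (z : R[i]) : conjc z = z -> (complex.Re z)%:C = z.
Proof. by case: z => a b /= [/eqP]; rewrite eqNr => /eqP ->. Qed.

Lemma idft_synth (N : nat) (X : nat -> Cx) (t : Z) : (0 < N)%N ->
  hermitian N (fun n => toC (X n)) ->
  (idft N X t)%:C = ((INR N)^-1)%:C * synth N (fun n => toC (X n)) t.
Proof.
move=> hN hX.
have -> : idft N X t = (INR N)^-1 * complex.Re (synth N (fun n => toC (X n)) t).
  rewrite /idft RinvE RmultE; congr (_ * _).
  rewrite -[Cre _]/(complex.Re (toC _)) toC_csum /synth.
  by congr complex.Re; apply: eq_bigr => n _; rewrite toC_mul.
by rewrite realcM Re_conjc_fixed // synth_real.
Qed.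

Lemma synth_shift_mul (N : nat) (G : nat -> R[i]) (m k : Z) (l : nat) :
  synth N G (m - 2 * Z.of_nat l) * conjc (synth N G (k - 2 * Z.of_nat l)) =
  \sum_(0 <= n < N) \sum_(0 <= n' < N) G n * conjc (G n') *
     (omega N (m * Z.of_nat n - k * Z.of_nat n') *
      omega N (Z.of_nat 2 * Z.of_nat l * (Z.of_nat n' - Z.of_nat n))).
Proof.
rewrite /synth conjc_sum big_distrlr.
apply: eq_bigr => n _; apply: eq_bigr => n' _ /=.
rewrite conjcM -omegaN.
have -> : omega N (m * Z.of_nat n - k * Z.of_nat n') *
          omega N (Z.of_nat 2 * Z.of_nat l * (Z.of_nat n' - Z.of_nat n)) =
          omega N ((m - 2 * Z.of_nat l) * Z.of_nat n) *
          omega N (- ((k - 2 * Z.of_nat l) * Z.of_nat n')).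
  by rewrite -!omegaD; congr omega; lia.
by ring.
Qed.

End Synthesis.

Section Reproducing.
Local Open Scope ring_scope.
Local Open Scope complex_scope.

Variable M : nat.
Hypothesis M_gt0 : (0 < M)%N.
Local Notation N := (2 * M)%N.

(* the translates g mu (. - 2l), mu < 2, l < M, have the N-periodic delta as reproducing
   kernel; as there are N of them, this says they form an orthonormal basis of Pi[N] *)
Definition reproducing (g : nat -> Z -> R) : Prop :=
  forall m k : Z, \sum_(0 <= mu < 2) \sum_(0 <= l < M)
    shift2 (g mu) l m * shift2 (g mu) l k = pdelta N (m - k).

(* the perfect-reconstruction condition of a two-channel filter bank with spectra G 0, G 1:
   the 2x2 modulation matrices (G mu n, G mu (n + M)) are sqrt 2 times unitary *)
Definition paraunitary (G : nat -> nat -> R[i]) : Prop :=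
  forall n n' : nat, (n < N)%N -> (n' < N)%N ->
  ((Z.of_nat n' - Z.of_nat n) mod Z.of_nat M = 0)%Z ->
  \sum_(0 <= mu < 2) G mu n * conjc (G mu n') = if n == n' then 2 else 0.

(* summing over the even translations kills every alias term but the diagonal one *)
Lemma paraunitary_alias (G : nat -> nat -> R[i]) (n n' : nat) :
  paraunitary G -> (n < N)%N -> (n' < N)%N ->
  (\sum_(0 <= mu < 2) G mu n * conjc (G mu n')) *
  (\sum_(0 <= l < M) omega N (Z.of_nat 2 * Z.of_nat l * (Z.of_nat n' - Z.of_nat n))) =
  if n == n' then N%:R else 0.
Proof.
move=> pu hn hn'; rewrite omega_geometric // /pdelta.
case: Z.eqb_spec => hd.
  by rewrite pu //; case: eqP => _; rewrite ?mul0r // mulr1 realc_nat natrM.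
rewrite mulr0 (_ : 0%:C = 0) // mulr0; case: eqP => // eq_nn'.
by rewrite eq_nn' Z.sub_diag Z.mod_0_l in hd; lia.
Qed.

Lemma reproducing_of_spectrum (X : nat -> nat -> Cx) :
  (forall mu, hermitian N (fun n => toC (X mu n))) ->
  paraunitary (fun mu n => toC (X mu n)) ->
  reproducing (fun mu => idft N (X mu)).
Proof.
move=> herm pu m k.
have N_gt0 : (0 < N)%N by rewrite muln_gt0.
pose G mu n := toC (X mu n).
pose c : R := (INR N)^-1.
have prod mu l : (shift2 (idft N (X mu)) l m * shift2 (idft N (X mu)) l k)%:C =
    (c ^+ 2)%:C * \sum_(0 <= n < N) \sum_(0 <= n' < N) G mu n * conjc (G mu n') *
      (omega N (m * Z.of_nat n - k * Z.of_nat n') *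
       omega N (Z.of_nat 2 * Z.of_nat l * (Z.of_nat n' - Z.of_nat n))).
  rewrite /shift2 realcM !idft_synth //.
  rewrite -[synth N _ (k - _)](synth_real _ _ _ N_gt0 (herm mu)).
  by rewrite mulrACA -realcM -expr2 synth_shift_mul.
have diag n : (0 <= n < N)%N ->
    \sum_(0 <= n' < N) omega N (m * Z.of_nat n - k * Z.of_nat n') *
      ((\sum_(0 <= mu < 2) G mu n * conjc (G mu n')) *
       (\sum_(0 <= l < M) omega N (Z.of_nat 2 * Z.of_nat l * (Z.of_nat n' - Z.of_nat n)))) =
    omega N (Z.of_nat 1 * Z.of_nat n * (m - k)) * N%:R.
  move=> /andP [_ hn].
  rewrite (eq_big_nat _ _ (F2 := fun n' => if n == n' then
             omega N (Z.of_nat 1 * Z.of_nat n' * (m - k)) * N%:R else 0)) ?sum_nat_delta //.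
  move=> n' /andP [_ hn']; rewrite (paraunitary_alias G) //.
  by case: eqP => [<-|_]; rewrite ?mulr0 //; congr (omega N _ * _); lia.
apply: (@complexI R).
rewrite realc_sum; under eq_bigr do rewrite realc_sum.
under eq_bigr do under eq_bigr do rewrite prod.
under eq_bigr do rewrite -mulr_sumr.
rewrite -mulr_sumr sum_factor_exchange (eq_big_nat _ _ diag) -mulr_suml.
have := omega_geometric 1 N (m - k) isT N_gt0; rewrite mul1n => ->.
rewrite -realc_nat -!realcM; congr (_%:C).
rewrite /c INRE; field; rewrite pnatr_eq0; lia.
Qed.

End Reproducing.

Section Complementary.
Local Open Scope ring_scope.
Local Open Scope complex_scope.

Lemma hermitian_mul (N : nat) (F G : nat -> R[i]) :
  hermitian N F -> hermitian N G -> hermitian N (fun n => F n * G n).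
Proof.
move=> [hF0 hF] [hG0 hG]; split => [|n hn]; first by rewrite conjcM -hF0 -hG0.
by rewrite conjcM hF // hG.
Qed.

Lemma paraunitary_unimodular (M : nat) (h : nat -> R[i]) (G : nat -> nat -> R[i]) :
  (forall n, h n * conjc (h n) = 1) -> paraunitary M G ->
  paraunitary M (fun mu n => h n * G mu n).
Proof.
move=> hunit pu n n' hn hn' hd.
have -> : \sum_(0 <= mu < 2) h n * G mu n * conjc (h n' * G mu n') =
          (h n * conjc (h n')) * \sum_(0 <= mu < 2) G mu n * conjc (G mu n').
  by rewrite mulr_sumr; apply: eq_bigr => mu _; rewrite conjcM; ring.
by rewrite pu //; case: eqP => [<-|_]; rewrite ?hunit ?mul1r ?mulr0.
Qed.

(* the multiplier relating psi to its complementary packet phi (a discrete Hilbert transform):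
   -i on ]0, N/2[, i on ]N/2, N[ and 1 at 0 and N/2 *)
Definition phase (N n : nat) : R[i] :=
  if andb (Nat.ltb 0 n) (Nat.ltb n (N / 2)) then - 'i
  else if andb (Nat.ltb (N / 2) n) (Nat.ltb n N) then 'i else 1.

Lemma phihat_phase (N r mu n : nat) :
  toC (phihat N r mu n) = phase N n * toC (psihat N r mu n).
Proof. by rewrite /phihat /phase; case: andb; [|case: andb]; rewrite ?toC_mul ?mul1r. Qed.

Lemma conjc_i : conjc 'i = - 'i :> R[i].
Proof. by apply/eqP; rewrite eq_complex /= oppr0 !eqxx. Qed.

Lemma phase_unit (N n : nat) : phase N n * conjc (phase N n) = 1.
Proof.
have i_unit : 'i * conjc 'i = 1 :> R[i] by rewrite conjc_i mulrN -expr2 sqr_i opprK.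
rewrite /phase; case: andb; last case: andb; rewrite ?conjcN ?mulrNN //.
by rewrite mul1r conjc1.
Qed.

End Complementary.

Section PacketSpectra.
Local Open Scope ring_scope.
Local Open Scope complex_scope.

Variables M r : nat.
Hypothesis M_gt0 : (0 < M)%N.
Local Notation N := (2 * M)%N.

Lemma N_gt0 : (0 < N)%N.
Proof. by rewrite muln_gt0. Qed.

Lemma psihat_lowpass (n : nat) : toC (psihat N r 0 n) = (pamp N r n)%:C.
Proof. by []. Qed.

Lemma psihat_highpass (mu n : nat) :
  toC (psihat N r mu.+1 n) = omega N (Z.of_nat n) * (qamp N r n)%:C.
Proof. exact: toC_mul. Qed.

Lemma omega_reflect (n : nat) :
  (n <= N)%N -> omega N (Z.of_nat (N - n)) = conjc (omega N (Z.of_nat n)).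
Proof.
move=> hn; rewrite -omegaN.
rewrite (_ : Z.of_nat (N - n) = (- Z.of_nat n + Z.of_nat N * 1)%Z); last by lia.
by rewrite omegaD omega_period ?N_gt0 // mulr1.
Qed.

Lemma omega_half_shift (n : nat) : omega N (Z.of_nat (n + M)) = - omega N (Z.of_nat n).
Proof. by rewrite Nat2Z.inj_add omegaD omega_half // mulrN1. Qed.

Lemma psi_hermitian (mu : nat) : hermitian N (fun n => toC (psihat N r mu n)).
Proof.
have hN : (0 < N)%coq_nat by apply/ltP; exact: N_gt0.
case: mu => [|mu]; split => [|n /andP [hn1 hn2]].
- by rewrite psihat_lowpass conjc_real.
- by rewrite !psihat_lowpass conjc_real pamp_reflect //; lia.
- by rewrite psihat_highpass conjcM conjc_real -omegaN.
- rewrite !psihat_highpass omega_reflect; last by lia.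
  by rewrite qamp_reflect ?conjcM ?conjc_real //; lia.
Qed.

(* the psi filter bank is paraunitary: cos^2r and sin^2r are exchanged by the half-band shift *)
Lemma psi_paraunitary : paraunitary M (fun mu n => toC (psihat N r mu n)).
Proof.
have hM : (0 < M)%coq_nat by apply/ltP.
pose S a b := toC (psihat N r 0 a) * conjc (toC (psihat N r 0 b)) +
               toC (psihat N r 1 a) * conjc (toC (psihat N r 1 b)).
have cross n : S n (n + M)%N = 0 /\ S (n + M)%N n = 0.
  rewrite /S !psihat_lowpass !(psihat_highpass 0) pamp_half_shift // qamp_half_shift //.
  rewrite omega_half_shift !conjcM !conjc_real conjcN.
  set w := omega N (Z.of_nat n); set p := (pamp N r n)%:C; set q := (qamp N r n)%:C.
  have -> : p * q + w * q * (- conjc w * p) = p * q * (1 - w * conjc w) by ring.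
  have -> : q * p + - w * p * (conjc w * q) = p * q * (1 - w * conjc w) by ring.
  by rewrite omega_unit subrr mulr0.
move=> n n' hn hn' hd; rewrite big_ltn // big_nat1.
have [->|[->|->]] : n' = n \/ n' = (n + M)%N \/ n = (n' + M)%N.
- apply Z.mod_divide in hd; last by lia.
  case: hd => t ht; have : (t = 0 \/ t = 1 \/ t = -1)%Z by nia.
  by lia.
- rewrite eqxx !psihat_lowpass !(psihat_highpass 0) !conjcM !conjc_real.
  rewrite mulrACA omega_unit mul1r -!realcM -realc_nat -realcD.
  by congr (_%:C); have := amp_sq_sum N r n; rewrite RplusE !RmultE.
- by case: eqP => [|_]; [lia | exact: (proj1 (cross n))].
- by case: eqP => [|_]; [lia | exact: (proj2 (cross n'))].
Qed.

Lemma ltbE (a b : nat) : Nat.ltb a b = (a < b)%N.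
Proof.
by apply/idP/idP => h; [apply/ltP; apply/Nat.ltb_lt | apply/Nat.ltb_lt; apply/ltP].
Qed.

Lemma phase_cases (n : nat) :
  phase N n = if (0 < n < M)%N then - 'i else if (M < n < N)%N then 'i else 1.
Proof.
rewrite /phase !ltbE (_ : Nat.div N 2 = M) //.
by rewrite mulnC; apply: Nat.div_mul.
Qed.

Lemma phase_hermitian : hermitian N (phase N).
Proof.
have low n : (0 < n < M)%N -> phase N n = - 'i by rewrite phase_cases => ->.
have high n : (M < n < N)%N -> phase N n = 'i.
  by move=> hn; rewrite phase_cases hn ifN //; lia.
split => [|n /andP [hn1 hn2]]; first by rewrite phase_cases !ltn0 !andFb conjc1.
case: (ltngtP n M) => hnM.
- by rewrite (low n) ?(high (N - n)%N) ?conjcN ?conjc_i ?opprK //; lia.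
- by rewrite (high n) ?(low (N - n)%N) ?conjc_i //; lia.
- by rewrite hnM (_ : (N - M = M)%N) ?phase_cases ?ltnn ?andbF ?conjc1 //; lia.
Qed.

Lemma phi_hermitian (mu : nat) : hermitian N (fun n => toC (phihat N r mu n)).
Proof.
have [h0 h] := hermitian_mul _ _ _ phase_hermitian (psi_hermitian mu).
by split => [|n hn]; rewrite !phihat_phase; [exact: h0 | exact: h].
Qed.

Lemma phi_paraunitary : paraunitary M (fun mu n => toC (phihat N r mu n)).
Proof.
move=> n n' hn hn' hd; under eq_bigr do rewrite !phihat_phase.
exact: (paraunitary_unimodular _ _ _ (phase_unit N) psi_paraunitary).
Qed.

Lemma psi_reproducing : reproducing M (psi1 N r).
Proof. exact: reproducing_of_spectrum M_gt0 _ psi_hermitian psi_paraunitary. Qed.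

Lemma phi_reproducing : reproducing M (phi1 N r).
Proof. exact: reproducing_of_spectrum M_gt0 _ phi_hermitian phi_paraunitary. Qed.

End PacketSpectra.

Section Expansion.
Local Open Scope ring_scope.

Lemma sum_pdelta (N : nat) (x : Z -> R) (k : Z) : (0 < N)%N -> periodic N x ->
  \sum_(0 <= j < N) x (Z.of_nat j) * pdelta N (Z.of_nat j - k) = x k.
Proof.
move=> hN hx.
have hb := Z.mod_pos_bound k (Z.of_nat N) ltac:(lia).
set j0 := Z.to_nat (k mod Z.of_nat N).
rewrite (eq_big_nat _ _ (F2 := fun j => if j0 == j then x (Z.of_nat j) else 0)).
  by rewrite sum_nat_delta /j0 ?Z2Nat.id -?periodic_mod //; lia.
move=> j /andP [_ hj]; rewrite /pdelta.
have := sub_mod_eq0 (Z.of_nat N) (Z.of_nat j) k ltac:(lia) ltac:(lia).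
by case: Z.eqb_spec => hjk; case: eqP => hj0; rewrite ?mulr1 ?mulr0 //; lia.
Qed.

Lemma innerE (N : nat) (x y : Z -> R) :
  inner N x y = \sum_(0 <= j < N) x (Z.of_nat j) * y (Z.of_nat j).
Proof. by rewrite /inner rsumE. Qed.

Lemma expansion_sum (M : nat) (g : nat -> Z -> R) (x : Z -> R) (k : Z) :
  (0 < M)%N -> reproducing M g -> periodic (2 * M) x ->
  \sum_(0 <= mu < 2) \sum_(0 <= l < M)
    inner (2 * M) x (shift2 (g mu) l) * shift2 (g mu) l k = x k.
Proof.
move=> hM g_rep hx.
under eq_bigr do under eq_bigr do rewrite innerE mulr_suml.
under eq_bigr do rewrite exchange_big_nat.
rewrite exchange_big_nat -[RHS](sum_pdelta (2 * M) x k) ?muln_gt0 //.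
apply: eq_bigr => j _; rewrite -g_rep mulr_sumr; apply: eq_bigr => mu _.
by rewrite mulr_sumr; apply: eq_bigr => l _; rewrite mulrA.
Qed.

End Expansion.

Lemma expansion (M : nat) (g : nat -> Z -> R) (x : Z -> R) (k : Z) :
  (0 < M)%N -> reproducing M g -> periodic (2 * M) x ->
  rsum 2 (fun mu => rsum M (fun l =>
    inner (2 * M) x (shift2 (g mu) l) * shift2 (g mu) l k)) = x k.
Proof.
move=> hM g_rep hx; rewrite rsumE; under eq_bigr do rewrite rsumE.
exact: expansion_sum.
Qed.

Lemma parseval (M : nat) (g : nat -> Z -> R) (x : Z -> R) :
  (0 < M)%N -> reproducing M g -> periodic (2 * M) x ->
  rsum 2 (fun mu => rsum M (fun l => inner (2 * M) x (shift2 (g mu) l) ^ 2)) =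
  inner (2 * M) x x.
Proof.
move=> hM g_rep hx; rewrite rsumE; under eq_bigr do rewrite rsumE.
under eq_bigr do under eq_bigr do rewrite RpowE expr2 {2}innerE mulr_sumr.
under eq_bigr do rewrite exchange_big_nat.
rewrite exchange_big_nat [RHS]innerE; apply: eq_bigr => j _.
symmetry; rewrite -{2}(expansion_sum _ _ x (Z.of_nat j) hM g_rep hx) mulr_sumr.
apply: eq_bigr => mu _; rewrite mulr_sumr; apply: eq_bigr => l _.
by rewrite mulrCA.
Qed.

End SpectralFrame.

Import SpectralFrame.

Theorem corollary4p4 (J r : nat) (HJ : (1 <= J)%nat) (Hr : (1 <= r)%nat) :
  let N := (2 ^ J)%nat in
  (* reconstruction formula *)
  (forall x : Z -> R, periodic N x ->
   forall k : Z,
     x k = / 2 * rsum 2 (fun mu => rsum (N / 2) (fun l =>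
             inner N x (shift2 (psi1 N r mu) l) * shift2 (psi1 N r mu) l k
           + inner N x (shift2 (phi1 N r mu) l) * shift2 (phi1 N r mu) l k)))
  /\
  (* tight frame of Pi[N] with frame bound 2 *)
  (forall x : Z -> R, periodic N x ->
     rsum 2 (fun mu => rsum (N / 2) (fun l =>
             (inner N x (shift2 (psi1 N r mu) l)) ^ 2
           + (inner N x (shift2 (phi1 N r mu) l)) ^ 2))
     = 2 * inner N x x).
Proof.
move=> N.
have [M hN hM] : exists2 M, N = ssrnat.muln 2 M & (0 < M)%nat.
  case: J HJ @N => [|J] HJ N; first by lia.
  by exists (2 ^ J)%nat; last by have := Nat.pow_nonzero 2 J; lia.
have hM' := ssrbool.introT ssrnat.ltP hM.
rewrite (_ : (N / 2 = M)%nat); last by rewrite hN; change (2 * M / 2 = M)%nat;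
  rewrite Nat.mul_comm Nat.div_mul.
rewrite hN; split => [x hx k | x hx]; rewrite rsum_add2.
- by rewrite (expansion M _ x k hM' (psi_reproducing M r hM') hx)
             (expansion M _ x k hM' (phi_reproducing M r hM') hx); field.
- by rewrite (parseval M _ x hM' (psi_reproducing M r hM') hx)
             (parseval M _ x hM' (phi_reproducing M r hM') hx); ring.
Qed.
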